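(* Let $k\ge 2$ be an integer. For any positive integer $c$, \[ z_k(c)=\xi_k\sum_{t\in\mathbb{N}\cap[c^{1/k},\infty)}\frac{|\mu(t)|}{t^{2k}}\prod_{p\mid t}\frac{1}{1-\frac{2}{p^k}}, \qquad\text{where}\qquad \xi_k:=\prod_{p}\Bigl(1-(p^k-1)^{-2}\Bigr). \]
   Context: $\mu$ is the Möbius function, $\mu_{k+1}(q)$ is the indicator function of the $(k+1)$-free positive integers, and $p$ always denotes a prime (products over $p$ are over all primes, or over primes dividing the indicated integer). For $c\in\mathbb{N}$, \[ z_k(c):=\sum_{\substack{r\in\mathbb{N}\\ r\ge c}}\ \sum_{d\in\mathbb{N}}\mu(d)\,\mu_{k+1}(dr)\prod_{p\mid dr}\frac{1}{(p^k-1)^2}. \] *)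

From HB Require Import structures.
From mathcomp Require Import all_boot all_order all_algebra.
From mathcomp Require Import all_classical all_reals all_analysis.
Set Implicit Arguments. Unset Strict Implicit. Unset Printing Implicit Defensive.
Import Order.TTheory GRing.Theory Num.Theory numFieldNormedType.Exports.
Local Open Scope ring_scope.

Definition powfree (m n : nat) : bool :=
  (0 < n)%N && all (fun p => (logn p n < m)%N) (primes n).

(* squarefree indicator = |mu(n)| *)
Definition squarefree (n : nat) : bool := powfree 2 n.

(* Moebius function, with mu 0 = 0 (never used at 0). *)
Definition moebius (n : nat) : int :=
  if squarefree n then (-1) ^+ size (primes n) else 0.

Definition mu_free (R : nzRingType) (k q : nat) : R :=
  if powfree k.+1 q then 1 else 0.

Definition prod_pdiv (R : nzRingType) (n : nat) (f : nat -> R) : R :=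
  \prod_(p <- primes n) f p.

(* z_k(c) = sum_{r >= c} sum_{d >= 1} mu(d) mu_{k+1}(dr) prod_{p|dr} (p^k-1)^{-2},
   infinite sums as limits of partial sums (iterated). *)
Definition z_k (R : realType) (k c : nat) : R :=
  limn (fun M : nat => (\sum_(c <= r < M)
     limn (fun N : nat => (\sum_(1 <= d < N)
        ((moebius d)%:~R * mu_free R k (d * r)
         * prod_pdiv (d * r) (fun p => ((p%:R : R) ^+ k - 1)^-2)) : R)) : R)).

Definition xi_k (R : realType) (k : nat) : R :=
  limn (fun N : nat => (\prod_(0 <= p < N | prime p) (1 - ((p%:R : R) ^+ k - 1)^-2) : R)).

From HB Require Import structures.
From mathcomp Require Import all_boot all_order all_algebra.
From mathcomp Require Import all_classical all_reals all_analysis.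
From mathcomp Require Import ring lra zify.
Import Order.TTheory GRing.Theory Num.Theory numFieldNormedType.Exports.

(* For fixed r only squarefree d contribute to the inner series, and for them
   mu(d) mu_{k+1}(dr) prod_{p | dr} g(p), with g(p) = (p^k - 1)^-2, is
   mu_{k+1}(r) prod_{p | r} g(p) times a multiplicative function of d.  Over the
   divisors of prod_{p < N} p the inner sum is therefore an Euler product; for
   N > r it equals prod_{p < N} (1 - g(p)) times a quantity v(r) independent of
   N, while the terms with d >= N are bounded by r^2 / d^2.  Hence the inner
   series converges to xi_k v(r).  Now v(r) = 0 unless r = t^k with t
   squarefree, and then
     v(r) = prod_{p | t} g(p) / (1 - g(p)) = prod_{p | t} p^(-2k) (1 - 2 p^(-k))^-1.
   The partial sums over c <= r < M and over t < T with c <= t^k are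
   nondecreasing, bounded, and coincide for M = T^k, so they have the same
   limit. *)

Set Implicit Arguments.
Unset Strict Implicit.
Unset Printing Implicit Defensive.

Lemma prod_primes_gt0 (s : seq nat) : all prime s -> 0 < \prod_(p <- s) p.
Proof.
by move=> /allP ps; rewrite big_seq prodn_cond_gt0 // => p /ps/prime_gt0.
Qed.

Lemma logn_prod_primes (s : seq nat) q : uniq s -> all prime s ->
  logn q (\prod_(p <- s) p) = (q \in s).
Proof.
elim: s => [|p s IHs] /=; first by rewrite big_nil logn1.
case/andP=> p_s s_uniq /andP[p_pr s_pr].
rewrite big_cons lognM ?(prime_gt0 p_pr) ?prod_primes_gt0 // IHs // logn_prime // inE.
by have [->|] := eqVneq q p; rewrite ?(negbTE p_s).
Qed.

Lemma dvdn_from_log m n : 0 < m -> 0 < n ->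
  (forall p, logn p m <= logn p n) -> m %| n.
Proof.
move=> m_gt0 n_gt0 le_mn; apply/gcdn_idPl.
apply: eqn_from_log => [||p]; rewrite ?gcdn_gt0 ?m_gt0 //.
by rewrite logn_gcd // (minn_idPl (le_mn p)).
Qed.

Lemma dvdn_prod_primes (s : seq nat) r : 0 < r -> uniq s -> all prime s ->
  (forall q, q \in s -> q %| r) -> \prod_(q <- s) q %| r.
Proof.
move=> r_gt0 s_uniq s_pr s_dvd; apply: dvdn_from_log; rewrite ?prod_primes_gt0 // => q.
rewrite logn_prod_primes //; have [q_s|//] := boolP (q \in s).
by rewrite logn_gt0 mem_primes r_gt0 s_dvd // (allP s_pr).
Qed.

Lemma powfreeP {m n : nat} : 0 < m ->
  reflect (0 < n /\ forall p, logn p n < m) (powfree m n).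
Proof.
move=> m_gt0; apply: (iffP andP) => [[n_gt0 /allP lt_log]|[n_gt0 lt_log]].
  split=> // p; have [/lt_log //|] := boolP (p \in primes n).
  by rewrite -logn_gt0 lt0n negbK => /eqP->.
by split=> //; apply/allP => p _; apply: lt_log.
Qed.

Lemma squarefree_gt0 d : squarefree d -> 0 < d.
Proof. by case/andP. Qed.

Lemma logn_squarefree d q : squarefree d -> logn q d = (q \in primes d).
Proof.
by case/(powfreeP (ltn0Sn 1)) => _ /(_ q); rewrite -logn_gt0; case: logn => [|[|]].
Qed.

Lemma squarefree_prod_primes d : squarefree d -> d = \prod_(p <- primes d) p.
Proof.
move=> d_sqf; apply: eqn_from_log => [||q].
- exact: squarefree_gt0.
- exact/prod_primes_gt0/all_prime_primes.
by rewrite logn_prod_primes ?primes_uniq ?all_prime_primes // logn_squarefree.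
Qed.

Lemma prod_primes_squarefree (s : seq nat) : uniq s -> all prime s ->
  squarefree (\prod_(p <- s) p).
Proof.
move=> s_uniq s_pr; apply/(powfreeP (ltn0Sn 1)); split; first exact: prod_primes_gt0.
by move=> q; rewrite logn_prod_primes //; case: (q \in s).
Qed.

Lemma primes_prod_primes (s : seq nat) : uniq s -> all prime s ->
  primes (\prod_(p <- s) p) =i s.
Proof.
by move=> s_uniq s_pr q; rewrite -logn_gt0 logn_prod_primes //; case: (q \in s).
Qed.

Lemma perm_divisorsM_prime p m : prime p -> 0 < m -> ~~ (p %| m) ->
  perm_eq (divisors (p * m)) (divisors m ++ map (muln p) (divisors m)).
Proof.
move=> p_pr m_gt0 p_ndvd_m; have p_gt0 := prime_gt0 p_pr.
have mulp_inj : injective (muln p) by move=> x y /eqP; rewrite eqn_pmul2l // => /eqP.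
apply: uniq_perm; first exact: divisors_uniq.
  rewrite cat_uniq divisors_uniq map_inj_uniq ?divisors_uniq //= andbT.
  apply/hasPn => _ /mapP[e _ ->]; rewrite -dvdn_divisors //.
  by apply: contra p_ndvd_m; apply: dvdn_trans; apply: dvdn_mulr.
move=> d; rewrite mem_cat -!dvdn_divisors ?muln_gt0 ?p_gt0 //; apply/idP/orP.
  move=> d_dvd; have [/dvdnP[e d_eq]|p_ndvd_d] := boolP (p %| d).
    right; rewrite d_eq mulnC in d_dvd *; apply: map_f.
    by rewrite -dvdn_divisors // -(dvdn_pmul2l p_gt0).
  by left; rewrite -(@Gauss_dvdr d p m) // coprime_sym prime_coprime.
case=> [/dvdn_mull -> // | /mapP[e]].
by rewrite -dvdn_divisors // => e_dvd ->; rewrite dvdn_pmul2l.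
Qed.

Lemma perm_primesM d r : 0 < d -> 0 < r ->
  perm_eq (primes (d * r)) (primes r ++ [seq q <- primes d | ~~ (q %| r)]).
Proof.
move=> d_gt0 r_gt0; apply: uniq_perm; first exact: primes_uniq.
  rewrite cat_uniq primes_uniq filter_uniq ?primes_uniq // andbT /=.
  apply/hasPn => q; rewrite mem_filter => /andP[/negbTE q_ndvd _].
  by rewrite mem_primes q_ndvd !andbF.
move=> q; rewrite primesM // mem_cat mem_filter !mem_primes d_gt0 r_gt0 /=.
by case: (prime q); case: (q %| r); case: (q %| d).
Qed.

Lemma powfreeM_squarefree k d r : 0 < k -> 0 < r -> squarefree d ->
  powfree k.+1 (d * r) =
  powfree k.+1 r && all (fun q => (q %| r) ==> (logn q r < k)) (primes d).
Proof.
move=> k_gt0 r_gt0 d_sqf; have d_gt0 := squarefree_gt0 d_sqf.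
have lognDr q : logn q (d * r) = (q \in primes d) + logn q r.
  by rewrite lognM // logn_squarefree.
have logn0 q : ~~ (q %| r) -> logn q r = 0.
  by move=> q_ndvd; apply/eqP; rewrite eqn0Ngt logn_gt0 mem_primes (negbTE q_ndvd) !andbF.
apply/(powfreeP (ltn0Sn k))/andP => [[_ lt_log]|[]].
  split; last first.
    by apply/allP => q q_d; apply/implyP => _; have := lt_log q; rewrite lognDr q_d.
  apply/(powfreeP (ltn0Sn k)); split=> // q.
  by apply: leq_ltn_trans (lt_log q); rewrite lognDr leq_addl.
case/(powfreeP (ltn0Sn k)) => _ lt_log /allP d_ok.
split=> [|q]; first by rewrite muln_gt0 d_gt0.
rewrite lognDr; have [q_d|] := boolP (q \in primes d); last by rewrite add0n.
have := d_ok q q_d; have [_ /=|/logn0->] := boolP (q %| r); first by rewrite add1n ltnS.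
by rewrite addn0 ltnS.
Qed.

Lemma powfree_exp_squarefree k t : 0 < k -> squarefree t -> powfree k.+1 (t ^ k).
Proof.
move=> k_gt0 t_sqf; apply/(powfreeP (ltn0Sn k)).
split=> [|p]; first by rewrite expn_gt0 squarefree_gt0.
by rewrite lognX logn_squarefree //; case: (p \in primes t); rewrite ?muln1 ?muln0.
Qed.

Lemma exp_squarefreeP k r : 0 < k -> 0 < r ->
  reflect (exists2 t, squarefree t & r = t ^ k)
          (all (fun p => logn p r == k) (primes r)).
Proof.
move=> k_gt0 r_gt0; apply: (iffP allP) => [logr_k|[t t_sqf ->] p].
  exists (\prod_(p <- primes r) p).
    by apply: prod_primes_squarefree; rewrite ?primes_uniq ?all_prime_primes.
  apply: eqn_from_log => // [|q].
    by rewrite expn_gt0 prod_primes_gt0 ?all_prime_primes.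
  rewrite lognX logn_prod_primes ?primes_uniq ?all_prime_primes //.
  have [/logr_k/eqP->|q_r] := boolP (q \in primes r); first by rewrite muln1.
  by rewrite muln0; apply/eqP; rewrite eqn0Ngt logn_gt0.
by rewrite primesX // lognX logn_squarefree // => ->; rewrite muln1.
Qed.

Lemma leq_self_expn t k : 0 < k -> t <= t ^ k.
Proof. by case: t => // t k_gt0; rewrite -{1}(expn1 t.+1) leq_pexp2l. Qed.

Definition primes_below N := [seq p <- index_iota 0 N | prime p].

Definition prod_primes_below N := \prod_(p <- primes_below N) p.

Lemma primes_below_uniq N : uniq (primes_below N).
Proof. by rewrite filter_uniq // iota_uniq. Qed.

Lemma primes_below_prime N : all prime (primes_below N).
Proof. exact: filter_all. Qed.

Lemma prod_primes_below_gt0 N : 0 < prod_primes_below N.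
Proof. exact/prod_primes_gt0/primes_below_prime. Qed.

Lemma dvdn_prod_primes_below_squarefree N d :
  d %| prod_primes_below N -> squarefree d.
Proof.
move=> d_dvd; have := prod_primes_squarefree (primes_below_uniq N) (primes_below_prime N).
case/(powfreeP (ltn0Sn 1)) => P_gt0 lt_log.
apply/(powfreeP (ltn0Sn 1)); split=> [|q]; first exact: dvdn_gt0 d_dvd.
exact: leq_ltn_trans (dvdn_leq_log _ P_gt0 d_dvd) (lt_log q).
Qed.

Lemma squarefree_dvdn_prod_primes_below N d : d < N -> squarefree d ->
  d %| prod_primes_below N.
Proof.
move=> lt_dN d_sqf; apply: dvdn_from_log => [||q].
- exact: squarefree_gt0.
- exact: prod_primes_below_gt0.
rewrite logn_squarefree // logn_prod_primes ?primes_below_uniq ?primes_below_prime //.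
have [|//] := boolP (q \in primes d); rewrite mem_primes => /and3P[q_pr d_gt0 q_dvd].
by rewrite mem_filter mem_index_iota q_pr (leq_ltn_trans (dvdn_leq d_gt0 q_dvd)).
Qed.

Local Open Scope classical_set_scope.
Local Open Scope ring_scope.

Lemma sum_divisors_prod_primes (R : comNzRingType) (s : seq nat) (x : nat -> R) :
  uniq s -> all prime s ->
  \sum_(d <- divisors (\prod_(p <- s) p)%N) \prod_(q <- primes d) x q =
  \prod_(p <- s) (1 + x p).
Proof.
elim: s => [|p s IHs] /=; first by rewrite !big_nil big_seq1 big_nil.
case/andP=> p_s s_uniq /andP[p_pr s_pr].
have m_gt0 := prod_primes_gt0 s_pr.
have p_ndvd_m : ~~ (p %| \prod_(q <- s) q)%N.
  by move: p_s; rewrite -(primes_prod_primes s_uniq s_pr p) mem_primes p_pr m_gt0.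
rewrite !big_cons (perm_big _ (perm_divisorsM_prime p_pr m_gt0 p_ndvd_m)).
rewrite big_cat big_map /= IHs // mulrDl mul1r; congr (_ + _).
rewrite -IHs // big_distrr /=; apply: eq_big_seq => e; rewrite -dvdn_divisors // => e_dvd.
have e_gt0 := dvdn_gt0 m_gt0 e_dvd.
have p_ndvd_e : ~~ (p %| e)%N by apply: contra p_ndvd_m => /dvdn_trans; apply.
rewrite (perm_big (p :: primes e)) ?big_cons //.
apply: uniq_perm; first exact: primes_uniq.
  by rewrite /= primes_uniq andbT mem_primes (negbTE p_ndvd_e) !andbF.
by move=> q; rewrite (primesM _ (prime_gt0 p_pr) e_gt0) primes_prime // !inE.
Qed.

Lemma prodrN_seq (R : comNzRingType) (I : Type) (s : seq I) (F : I -> R) :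
  \prod_(i <- s) - F i = (-1) ^+ size s * \prod_(i <- s) F i.
Proof.
elim: s => [|i s IHs]; first by rewrite !big_nil mul1r.
by rewrite !big_cons IHs exprS; ring.
Qed.

Lemma prodr_if_natb (R : comNzRingType) (I : Type) (s : seq I) (P b : pred I)
    (F : I -> R) :
  \prod_(i <- s) (if P i then (b i)%:R else F i) =
  (all (fun i => P i ==> b i) s)%:R * \prod_(i <- s | ~~ P i) F i.
Proof.
elim: s => [|i s IHs]; first by rewrite !big_nil mul1r.
rewrite !big_cons IHs /=; case: (P i) => /=; last by ring.
by case: (b i) => /=; ring.
Qed.

Lemma big_nat_mem_uniq (R : nmodType) (s : seq nat) m n (F : nat -> R) :
  uniq s -> {subset s <= index_iota m n} ->
  \sum_(m <= i < n | i \in s) F i = \sum_(i <- s) F i.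
Proof.
move=> s_uniq s_sub; rewrite -big_filter; apply/perm_big/uniq_perm => //.
  by rewrite filter_uniq // iota_uniq.
by move=> i; rewrite mem_filter andb_idr // => /s_sub.
Qed.

Lemma ler_sum_nat_cond (R : numDomainType) m n n' (P P' : pred nat)
    (F : nat -> R) :
  (n <= n')%N -> (forall i, (m <= i < n)%N -> P i -> P' i) ->
  (forall i, 0 <= F i) ->
  \sum_(m <= i < n | P i) F i <= \sum_(m <= i < n' | P' i) F i.
Proof.
move=> le_nn' PP' F_ge0; rewrite (big_nat_widen _ _ _ _ _ le_nn').
rewrite big_mkcond [X in _ <= X]big_mkcond /=.
apply: ler_sum_nat => i /andP[le_mi _]; case: ifP => [/andP[Pi lt_in]|_].
  by rewrite PP' ?le_mi.
by case: ifP.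
Qed.

Lemma sum_inv_sqr_le (R : realFieldType) N M : (2 <= N)%N ->
  \sum_(N <= d < M) (d%:R ^+ 2 : R)^-1 <= (N.-1%:R)^-1.
Proof.
move=> N_ge2; have [le_NM|/ltnW le_MN] := leqP N M; last first.
  by rewrite big_geq // invr_ge0 ler0n.
have inv_sqr_le d : (2 <= d)%N -> (d%:R ^+ 2 : R)^-1 <= (d.-1%:R)^-1 - (d%:R)^-1.
  case: d => [//|d]; rewrite ltnS /= -(ler_nat R) => d_ge1.
  have -> : (d.+1%:R)^-1 = (d%:R + 1 : R)^-1 by rewrite -natr1.
  have -> : (d%:R)^-1 - (d%:R + 1)^-1 = (d%:R * (d%:R + 1) : R)^-1.
    by field; rewrite (lt0r_neq0 (_ : 0 < d%:R + 1)) ?lt0r_neq0 //; lra.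
  by rewrite natr1 ?lef_pV2 ?posrE ?mulr_gt0 ?exprn_gt0 // ?expr2; nra.
apply: le_trans (_ : \sum_(N <= d < M) ((d.-1%:R)^-1 - (d%:R)^-1) <= _).
  by apply: ler_sum_nat => d /andP[le_Nd _]; apply: inv_sqr_le (leq_trans N_ge2 le_Nd).
rewrite (telescope_sumr_eq (fun d => - (d.-1%:R : R)^-1) _ le_NM) => [|d _].
  have : 0 <= (M.-1%:R : R)^-1 by rewrite invr_ge0 ler0n.
  by rewrite opprK; lra.
by rewrite /= opprK addrC.
Qed.

Lemma sum_inv_sqr_le2 (R : realFieldType) T :
  \sum_(1 <= t < T) (t%:R ^+ 2 : R)^-1 <= 2.
Proof.
have [T_le1|lt_1T] := leqP T 1; first by rewrite big_geq.
rewrite big_ltn // expr1n invr1 -[2]/(1 + 1 : R) lerD2l.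
by have := sum_inv_sqr_le R T (leqnn 2); rewrite /= mulr1n invr1.
Qed.

Lemma cvg0_norm_le_harmonic (R : realType) (u : nat -> R) (C : R) :
  (forall n, `|u n| <= C * harmonic n) -> u @ \oo --> 0.
Proof.
move=> u_le.
apply: (@squeeze_cvgr _ _ _ _ (fun n => - (C * harmonic n)) (fun n => C * harmonic n)).
- by apply: nearW => n; rewrite -ler_norml.
- by rewrite -oppr0 -(mulr0 C); apply: cvgN; apply: cvgMl_tmp; exact: cvg_harmonic.
- by rewrite -(mulr0 C); apply: cvgMl_tmp; exact: cvg_harmonic.
Qed.

Lemma norm_moebius_le1 (R : numDomainType) d : `|(moebius d)%:~R : R| <= 1.
Proof.
rewrite /moebius; case: (squarefree d); last by rewrite normr0.
by rewrite rmorphXn rmorphN1 normrX normrN normr1 expr1n.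
Qed.

Lemma norm_mu_free_le1 (R : numDomainType) k n : `|mu_free R k n| <= 1.
Proof. by rewrite /mu_free; case: powfree; rewrite ?normr1 ?normr0. Qed.

Lemma powR_invn_le_nat (R : realType) k c t : (0 < k)%N ->
  ((c%:R : R) `^ (k%:R)^-1 <= t%:R) = (c <= t ^ k)%N.
Proof.
move=> k_gt0; set x := (c%:R : R) `^ (k%:R)^-1.
have xk : x ^+ k = c%:R.
  by rewrite -powR_mulrn ?powR_ge0 // /x -powRrM mulVf ?powRr1 ?pnatr_eq0 -?lt0n.
by rewrite -(ler_pXn2r k_gt0) ?nnegrE ?powR_ge0 // xk -natrX ler_nat.
Qed.

Section Zk.

Variables (R : realType) (k : nat).
Hypothesis k_ge2 : (2 <= k)%N.

Let k_gt0 : (0 < k)%N := leq_trans (isT : 0 < 2)%N k_ge2.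

Definition weight (p : nat) : R := (p%:R ^+ k - 1) ^- 2.

Definition weight_prod (n : nat) : R := prod_pdiv n weight.

Lemma four_le_prime_sqr p : prime p -> 4 <= (p%:R : R) ^+ 2.
Proof.
move=> p_pr; have : (2 : R) <= p%:R by rewrite (ler_nat _ 2) prime_gt1.
by rewrite expr2; nra.
Qed.

Lemma prime_sqr_le_exp p : prime p -> (p%:R : R) ^+ 2 <= p%:R ^+ k.
Proof. by move=> p_pr; rewrite ler_eXn2l // ltr1n prime_gt1. Qed.

Lemma weight_gt0 p : prime p -> 0 < weight p.
Proof.
move=> p_pr; have := le_trans (four_le_prime_sqr p_pr) (prime_sqr_le_exp p_pr).
by move=> y_ge4; rewrite invr_gt0 exprn_gt0 // subr_gt0; lra.
Qed.

Lemma sqr_mul_weight_le1 p : prime p -> (p%:R : R) ^+ 2 * weight p <= 1.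
Proof.
move=> p_pr; have := four_le_prime_sqr p_pr; have := prime_sqr_le_exp p_pr.
set s := (p%:R : R) ^+ 2; set y := (p%:R : R) ^+ k => s_le_y s_ge4.
have y_gt1 : 0 < y - 1 by lra.
by rewrite /weight -/y ler_pdivrMr ?exprn_gt0 // mul1r expr2; nra.
Qed.

Lemma weight_lt1 p : prime p -> weight p < 1.
Proof.
move=> p_pr; have := sqr_mul_weight_le1 p_pr; have := weight_gt0 p_pr.
by have := four_le_prime_sqr p_pr; nra.
Qed.

Lemma prod_weight_primes_ge0 n (P : pred nat) :
  0 <= \prod_(p <- primes n | P p) weight p.
Proof.
rewrite big_seq_cond; apply: prodr_ge0 => p /andP[].
by rewrite mem_primes => /andP[/weight_gt0/ltW].
Qed.

Lemma weight_prod_ge0 n : 0 <= weight_prod n.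
Proof. exact: prod_weight_primes_ge0. Qed.

Lemma weight_prod_le1 n : weight_prod n <= 1.
Proof.
rewrite /weight_prod /prod_pdiv big_seq; apply: prodr_ile1 => p.
by rewrite mem_primes => /andP[p_pr _]; rewrite !ltW ?weight_gt0 ?weight_lt1.
Qed.

Lemma weight_prodM d r : (0 < d)%N -> (0 < r)%N ->
  weight_prod (d * r) =
  weight_prod r * \prod_(q <- primes d | ~~ (q %| r)%N) weight q.
Proof.
move=> d_gt0 r_gt0; rewrite /weight_prod /prod_pdiv.
by rewrite (perm_big _ (perm_primesM d_gt0 r_gt0)) big_cat big_filter.
Qed.

Definition zterm (r d : nat) : R :=
  (moebius d)%:~R * mu_free R k (d * r) * weight_prod (d * r).

Definition local_factor (r q : nat) : R :=
  - (if (q %| r)%N then ((logn q r < k)%N)%:R else weight q).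

Lemma zterm_nonsquarefree r d : ~~ squarefree d -> zterm r d = 0.
Proof. by move=> d_nsqf; rewrite /zterm /moebius (negbTE d_nsqf) !mul0r. Qed.

Lemma zterm_squarefree r d : (0 < r)%N -> squarefree d ->
  zterm r d = mu_free R k r * weight_prod r * \prod_(q <- primes d) local_factor r q.
Proof.
move=> r_gt0 d_sqf; rewrite /zterm /moebius d_sqf rmorphXn rmorphN1 /=.
rewrite /mu_free powfreeM_squarefree // (weight_prodM (squarefree_gt0 d_sqf) r_gt0).
rewrite /local_factor prodrN_seq prodr_if_natb.
by case: (powfree k.+1 r); case: all => /=; ring.
Qed.

Lemma norm_zterm_le r d : (0 < r)%N -> squarefree d ->
  `|zterm r d| <= \prod_(q <- primes d | ~~ (q %| r)%N) weight q.
Proof.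
move=> r_gt0 d_sqf.
rewrite /zterm (weight_prodM (squarefree_gt0 d_sqf) r_gt0) !normrM.
rewrite (ger0_norm (weight_prod_ge0 r)) (ger0_norm (prod_weight_primes_ge0 _ _)).
rewrite -[X in _ <= X]mul1r; apply: ler_pM.
- by rewrite mulr_ge0 ?normr_ge0.
- by rewrite mulr_ge0 ?weight_prod_ge0 ?prod_weight_primes_ge0.
- by rewrite mulr_ile1 ?norm_moebius_le1 ?norm_mu_free_le1.
- by rewrite ler_piMl ?weight_prod_le1 ?prod_weight_primes_ge0.
Qed.

Lemma sqr_mul_prod_weight_le r d : (0 < r)%N -> squarefree d ->
  d%:R ^+ 2 * \prod_(q <- primes d | ~~ (q %| r)%N) weight q <= r%:R ^+ 2.
Proof.
move=> r_gt0 d_sqf.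
set a := (\prod_(q <- primes d | (q %| r)%N) q)%N.
set b := (\prod_(q <- primes d | ~~ (q %| r)%N) q)%N.
have d_ab : d = (a * b)%N.
  by rewrite {1}(squarefree_prod_primes d_sqf) (bigID (fun q => q %| r)%N).
have a_le_r : (a <= r)%N.
  apply: dvdn_leq => //; rewrite /a -big_filter; apply: dvdn_prod_primes => //.
  - by rewrite filter_uniq ?primes_uniq.
  - by rewrite all_filter; apply: sub_all (all_prime_primes d) => q q_pr; apply/implyP.
  - by move=> q; rewrite mem_filter => /andP[].
have b_weight : b%:R ^+ 2 * \prod_(q <- primes d | ~~ (q %| r)%N) weight q <= 1.
  rewrite /b natr_prod -prodrXl -big_split /= big_seq_cond.
  apply: prodr_ile1 => q /andP[]; rewrite mem_primes => /andP[q_pr _] _.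
  by rewrite sqr_mul_weight_le1 // mulr_ge0 ?exprn_ge0 ?ler0n // ltW ?weight_gt0.
have -> : (d%:R : R) = a%:R * b%:R by rewrite -natrM -d_ab.
rewrite exprMn -mulrA -[X in _ <= X]mulr1.
apply: ler_pM; rewrite ?mulr_ge0 ?exprn_ge0 ?ler0n ?prod_weight_primes_ge0 //.
by rewrite ler_pXn2r ?nnegrE ?ler0n // ler_nat.
Qed.

Lemma norm_zterm_le_ratio r d : (0 < r)%N -> squarefree d ->
  `|zterm r d| <= r%:R ^+ 2 / d%:R ^+ 2.
Proof.
move=> r_gt0 d_sqf.
rewrite ler_pdivlMr ?exprn_gt0 ?ltr0n ?squarefree_gt0 // mulrC.
apply: le_trans (sqr_mul_prod_weight_le r_gt0 d_sqf).
by rewrite ler_wpM2l ?exprn_ge0 ?ler0n ?norm_zterm_le.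
Qed.

Lemma sum_zterm_divisors r N : (0 < r)%N ->
  \sum_(d <- divisors (prod_primes_below N)) zterm r d =
  mu_free R k r * weight_prod r * \prod_(p <- primes_below N) (1 + local_factor r p).
Proof.
move=> r_gt0; have := sum_divisors_prod_primes (local_factor r) (primes_below_uniq N).
move=> /(_ (primes_below_prime N)) <-; rewrite big_distrr /=; apply: eq_big_seq => d.
rewrite -dvdn_divisors ?prod_primes_below_gt0 // => d_dvd.
by rewrite zterm_squarefree // (dvdn_prod_primes_below_squarefree d_dvd).
Qed.

Lemma sum_zterm_below r N :
  \sum_(1 <= d < N) zterm r d =
  \sum_(d <- divisors (prod_primes_below N) | (d < N)%N) zterm r d.
Proof.
have P_gt0 := prod_primes_below_gt0 N.
set s := [seq d <- divisors (prod_primes_below N) | (d < N)%N].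
have s_uniq : uniq s by rewrite filter_uniq ?divisors_uniq.
have s_sub : {subset s <= index_iota 1 N}.
  move=> d; rewrite mem_filter -dvdn_divisors // mem_index_iota.
  by case/andP=> -> /dvdn_gt0 ->.
rewrite -[RHS]big_filter -/s -[RHS](big_nat_mem_uniq _ s_uniq s_sub).
rewrite big_mkcond [RHS]big_mkcond; apply: eq_big_nat => d /andP[_ lt_dN].
rewrite mem_filter lt_dN -dvdn_divisors //=.
have [d_sqf|d_nsqf] := boolP (squarefree d).
  by rewrite squarefree_dvdn_prod_primes_below.
by rewrite zterm_nonsquarefree // if_same.
Qed.

Lemma norm_sum_zterm_tail_le r N : (0 < r)%N -> (2 <= N)%N ->
  `|\sum_(d <- divisors (prod_primes_below N) | ~~ (d < N)%N) zterm r d|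
    <= r%:R ^+ 2 / N.-1%:R.
Proof.
move=> r_gt0 N_ge2; apply: le_trans (ler_norm_sum _ _ _) _.
have P_gt0 := prod_primes_below_gt0 N.
set s := [seq d <- divisors (prod_primes_below N) | ~~ (d < N)%N].
have s_sub : {subset s <= index_iota N (prod_primes_below N).+1}.
  move=> d; rewrite mem_filter -dvdn_divisors // mem_index_iota -leqNgt ltnS.
  by case/andP=> -> /dvdn_leq ->.
rewrite -big_filter -/s; apply: le_trans (_ : \sum_(d <- s) r%:R ^+ 2 / d%:R ^+ 2 <= _).
  rewrite !big_seq; apply: ler_sum => d; rewrite mem_filter -dvdn_divisors //.
  by case/andP=> _ /dvdn_prod_primes_below_squarefree; apply: norm_zterm_le_ratio.
rewrite -big_distrr /= ler_wpM2l ?exprn_ge0 ?ler0n //.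
apply: le_trans (sum_inv_sqr_le R (prod_primes_below N).+1 N_ge2).
have s_uniq : uniq s by rewrite filter_uniq ?divisors_uniq.
rewrite -(big_nat_mem_uniq _ s_uniq s_sub).
by apply: ler_sum_nat_cond => // d; rewrite invr_ge0 exprn_ge0 ?ler0n.
Qed.

Definition xi_partial N : R := \prod_(0 <= p < N | prime p) (1 - weight p).

Definition euler_factor r : R := \prod_(p <- primes r) (1 - weight p).

Definition local_prod r : R := \prod_(p <- primes r) (1 + local_factor r p).

Lemma prod_local_factor_below r N : (0 < r)%N -> (r < N)%N ->
  \prod_(p <- primes_below N) (1 + local_factor r p) * euler_factor r =
  local_prod r * xi_partial N.
Proof.
move=> r_gt0 lt_rN.
have primes_r : [seq p <- primes_below N | (p %| r)%N] = primes r.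
  rewrite /primes_below -filter_predI -(filter_pi_of lt_rN); apply: eq_filter => p /=.
  by rewrite mem_primes r_gt0 andbC.
have split_r (F : nat -> R) : \prod_(p <- primes_below N) F p =
    \prod_(p <- primes r) F p * \prod_(p <- primes_below N | ~~ (p %| r)%N) F p.
  by rewrite (bigID (fun p => p %| r)%N) /= -big_filter primes_r.
have -> : xi_partial N = \prod_(p <- primes_below N) (1 - weight p).
  by rewrite /primes_below big_filter.
rewrite /euler_factor /local_prod !split_r.
have -> : \prod_(p <- primes_below N | ~~ (p %| r)%N) (1 + local_factor r p) =
          \prod_(p <- primes_below N | ~~ (p %| r)%N) (1 - weight p).
  by apply: eq_bigr => p /negbTE p_ndvd; rewrite /local_factor p_ndvd.
by ring.
Qed.

Lemma euler_factor_neq0 r : euler_factor r != 0.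
Proof.
rewrite prodf_seq_neq0; apply/allP => p; rewrite mem_primes => /andP[p_pr _].
by rewrite /= subr_eq0 eq_sym lt_eqF ?weight_lt1.
Qed.

Lemma xi_partial_cvg : xi_partial @ \oo --> xi_k R k.
Proof.
have xi_partial_ge0 N : 0 <= xi_partial N.
  by apply: prodr_ge0 => p p_pr; rewrite subr_ge0 ltW ?weight_lt1.
suff : cvgn xi_partial by [].
apply: cvgP (nonincreasing_cvgn _ _); last by exists 0 => _ [N _ <-].
apply/nonincreasing_seqP => N.
rewrite /xi_partial big_mkcond big_nat_recr //= -big_mkcond /=.
case: ifP => [p_pr|_]; last by rewrite mulr1.
by rewrite ler_piMr ?xi_partial_ge0 // lerBlDr lerDl ltW ?weight_gt0.
Qed.

Definition zvalue r : R :=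
  mu_free R k r * weight_prod r * local_prod r / euler_factor r.

Lemma sum_zterm_below_eq r N : (0 < r)%N -> (r < N)%N ->
  \sum_(1 <= d < N) zterm r d =
  xi_partial N * zvalue r -
  \sum_(d <- divisors (prod_primes_below N) | ~~ (d < N)%N) zterm r d.
Proof.
move=> r_gt0 lt_rN.
have -> : xi_partial N * zvalue r = \sum_(d <- divisors (prod_primes_below N)) zterm r d.
  rewrite sum_zterm_divisors // -[\prod_(p <- _) _](mulfK (euler_factor_neq0 r)).
  rewrite prod_local_factor_below // /zvalue; field; exact: euler_factor_neq0.
by rewrite sum_zterm_below [in RHS](bigID (fun d => d < N)%N) /= addrK.
Qed.

Lemma zterm_series_cvg r : (0 < r)%N ->
  (fun N => \sum_(1 <= d < N) zterm r d) @ \oo --> xi_k R k * zvalue r.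
Proof.
move=> r_gt0; rewrite -(cvg_shiftn r.+2).
set tail := fun N => \sum_(d <- divisors (prod_primes_below N) | ~~ (d < N)%N) zterm r d.
have -> : [sequence \sum_(1 <= d < n + r.+2) zterm r d]_n =
          (fun n => xi_partial (n + r.+2) * zvalue r - tail (n + r.+2)).
  by apply: funext => n; rewrite /= sum_zterm_below_eq //; lia.
rewrite -[_ * _]subr0; apply: cvgB.
  by apply: cvgMr_tmp; move: xi_partial_cvg; rewrite -(cvg_shiftn r.+2).
apply: (@cvg0_norm_le_harmonic _ _ (r%:R ^+ 2)) => n.
apply: le_trans (norm_sum_zterm_tail_le r_gt0 _) _; first by lia.
rewrite ler_wpM2l ?exprn_ge0 ?ler0n // lef_pV2 ?posrE ?ltr0n //; last by lia.
by rewrite ler_nat; lia.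
Qed.

Lemma zterm_series_lim r : (0 < r)%N ->
  limn (fun N => \sum_(1 <= d < N) zterm r d) = xi_k R k * zvalue r.
Proof.
by move=> r_gt0; apply: cvg_lim; [exact: Rhausdorff | exact: zterm_series_cvg].
Qed.

Definition hterm (t : nat) : R :=
  (if squarefree t then 1 else 0) / t%:R ^+ (2 * k) *
  prod_pdiv t (fun p => (1 - 2 / p%:R ^+ k)^-1).

Definition hfactor (p : nat) : R :=
  (p%:R ^+ (2 * k))^-1 * (1 - 2 / p%:R ^+ k)^-1.

Lemma hterm_squarefree t : squarefree t -> hterm t = \prod_(p <- primes t) hfactor p.
Proof.
move=> t_sqf; rewrite /hterm t_sqf /prod_pdiv {1}(squarefree_prod_primes t_sqf).
by rewrite natr_prod -prodrXl -prodfV mul1r -big_split.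
Qed.

Lemma hfactorE p : prime p -> hfactor p = (p%:R ^+ k * (p%:R ^+ k - 2))^-1.
Proof.
move=> p_pr; have := le_trans (four_le_prime_sqr p_pr) (prime_sqr_le_exp p_pr).
rewrite /hfactor mulnC exprM; set y := (p%:R : R) ^+ k => y_ge4.
by field; rewrite !lt0r_neq0 //; lra.
Qed.

Lemma weight_ratio p : prime p -> weight p / (1 - weight p) = hfactor p.
Proof.
move=> p_pr; have := le_trans (four_le_prime_sqr p_pr) (prime_sqr_le_exp p_pr).
rewrite hfactorE // /weight; set y := (p%:R : R) ^+ k => y_ge4.
by field; rewrite !lt0r_neq0 //; nra.
Qed.

Lemma hfactor_ge0 p : prime p -> 0 <= hfactor p.
Proof.
move=> p_pr; have := le_trans (four_le_prime_sqr p_pr) (prime_sqr_le_exp p_pr).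
by rewrite hfactorE // invr_ge0; nra.
Qed.

Lemma hfactor_le_inv_sqr p : prime p -> hfactor p <= (p%:R ^+ 2)^-1.
Proof.
move=> p_pr; rewrite hfactorE //.
have := four_le_prime_sqr p_pr; have := prime_sqr_le_exp p_pr.
set s := (p%:R : R) ^+ 2; set y := (p%:R : R) ^+ k => s_le_y s_ge4.
by rewrite lef_pV2 ?posrE; nra.
Qed.

Lemma hterm_ge0 t : 0 <= hterm t.
Proof.
have [t_sqf|t_nsqf] := boolP (squarefree t).
  rewrite hterm_squarefree // big_seq; apply: prodr_ge0 => p.
  by rewrite mem_primes => /andP[/hfactor_ge0].
by rewrite /hterm (negbTE t_nsqf) !mul0r.
Qed.

Lemma hterm_le_inv_sqr t : hterm t <= (t%:R ^+ 2)^-1.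
Proof.
have [t_sqf|t_nsqf] := boolP (squarefree t); last first.
  by rewrite /hterm (negbTE t_nsqf) !mul0r invr_ge0 exprn_ge0 ?ler0n.
rewrite hterm_squarefree // {2}(squarefree_prod_primes t_sqf).
rewrite natr_prod -prodrXl -prodfV.
rewrite !big_seq; apply: ler_prod => p; rewrite mem_primes => /andP[p_pr _].
by rewrite hfactor_ge0 ?hfactor_le_inv_sqr.
Qed.

Lemma zvalue_exp_squarefree t : squarefree t -> zvalue (t ^ k) = hterm t.
Proof.
move=> t_sqf; have t_gt0 := squarefree_gt0 t_sqf.
have primes_tk := primesX t k_gt0.
rewrite /zvalue; have -> : local_prod (t ^ k) = 1.
  rewrite /local_prod big_seq big1 // => p p_tk; rewrite /local_factor.
  have p_t : p \in primes t by rewrite -primes_tk.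
  move: p_tk; rewrite mem_primes => /and3P[_ _ ->].
  by rewrite lognX logn_squarefree // p_t muln1 ltnn mulr0n oppr0 addr0.
rewrite /mu_free powfree_exp_squarefree // mul1r mulr1.
rewrite /weight_prod /euler_factor /prod_pdiv primes_tk -prodf_div hterm_squarefree //.
by apply: eq_big_seq => p; rewrite mem_primes => /andP[/weight_ratio].
Qed.

Lemma zvalue_eq0 r : ~~ all (fun p => logn p r == k) (primes r) -> zvalue r = 0.
Proof.
move=> /allPn[p p_r logn_neq]; rewrite /zvalue /mu_free.
have [/(powfreeP (ltn0Sn k))[_ /(_ p)] |] := ifP; last by rewrite !mul0r.
rewrite ltnS leq_eqVlt (negbTE logn_neq) /= => logn_lt.
suff -> : local_prod r = 0 by rewrite mulr0 mul0r.
apply/eqP; rewrite prodf_seq_eq0; apply/hasP; exists p => //=.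
move: p_r; rewrite mem_primes => /and3P[_ _ p_dvd].
by rewrite /local_factor p_dvd logn_lt mulr1n subrr.
Qed.

Lemma zvalue_sum r M : (0 < r)%N -> (r < M)%N ->
  zvalue r = \sum_(1 <= t < M) (if r == (t ^ k)%N then hterm t else 0).
Proof.
move=> r_gt0 lt_rM; rewrite -big_mkcond /=.
have [kpow|not_kpow] := boolP (all (fun p => logn p r == k) (primes r)); last first.
  rewrite zvalue_eq0 // big1 // => t /eqP r_eq.
  rewrite /hterm; case: ifP => t_sqf; last by rewrite !mul0r.
  by case/negP: not_kpow; apply/(exp_squarefreeP k_gt0 r_gt0); exists t.
case/(exp_squarefreeP k_gt0 r_gt0): kpow => t t_sqf r_eq; subst r.
rewrite zvalue_exp_squarefree // (eq_bigl (fun u => u == t)) => [|u]; last first.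
  by rewrite eq_sym eqn_exp2r.
rewrite big_nat1_eq squarefree_gt0 //=.
by rewrite (leq_ltn_trans (leq_self_expn t k_gt0) lt_rM).
Qed.

Section OuterSum.

Variable c : nat.
Hypothesis c_gt0 : (0 < c)%N.

Definition hsum_kpow M := \sum_(1 <= t < M | (c <= t ^ k < M)%N) hterm t.

Definition hsum T := \sum_(1 <= t < T | (c <= t ^ k)%N) hterm t.

Lemma sum_zvalue M : \sum_(c <= r < M) zvalue r = hsum_kpow M.
Proof.
transitivity
  (\sum_(c <= r < M) \sum_(1 <= t < M) (if r == (t ^ k)%N then hterm t else 0)).
  apply: eq_big_nat => r /andP[c_le_r lt_rM].
  by rewrite (zvalue_sum _ lt_rM) // (leq_trans c_gt0 c_le_r).
rewrite exchange_big_nat /hsum_kpow [RHS]big_mkcond /=; apply: eq_bigr => t _.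
by rewrite -big_mkcond big_nat1_eq.
Qed.

Lemma hsum_kpow_exp T : hsum_kpow (T ^ k) = hsum T.
Proof.
rewrite /hsum (big_nat_widen _ _ (T ^ k)) ?leq_self_expn //.
by apply: eq_bigl => t; rewrite ltn_exp2r.
Qed.

Lemma hsum_le2 T : hsum T <= 2.
Proof.
apply: le_trans (sum_inv_sqr_le2 R T); rewrite /hsum big_mkcond /=.
apply: ler_sum_nat => t _; case: ifP => _; first exact: hterm_le_inv_sqr.
by rewrite invr_ge0 exprn_ge0 ?ler0n.
Qed.

Lemma hsum_kpow_homo : nondecreasing_seq hsum_kpow.
Proof.
move=> M M' le_MM'; apply: ler_sum_nat_cond => // [t _ /andP[-> lt_tM]|t].
  exact: leq_trans lt_tM le_MM'.
exact: hterm_ge0.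
Qed.

Lemma hsum_homo : nondecreasing_seq hsum.
Proof. by move=> T T' le_TT'; apply: ler_sum_nat_cond => // t; apply: hterm_ge0. Qed.

Lemma hsum_kpow_le2 M : hsum_kpow M <= 2.
Proof.
apply: le_trans (hsum_le2 M); rewrite -hsum_kpow_exp.
exact/hsum_kpow_homo/leq_self_expn.
Qed.

Lemma hsum_kpow_cvg : cvgn hsum_kpow.
Proof.
apply: cvgP (nondecreasing_cvgn hsum_kpow_homo _).
by exists 2 => _ [M _ <-]; apply: hsum_kpow_le2.
Qed.

Lemma hsum_cvg : cvgn hsum.
Proof.
apply: cvgP (nondecreasing_cvgn hsum_homo _).
by exists 2 => _ [T _ <-]; apply: hsum_le2.
Qed.

Lemma lim_hsum_kpow : limn hsum_kpow = limn hsum.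
Proof.
apply/eqP; rewrite eq_le; apply/andP; split.
  apply: ler_lim; [exact: hsum_kpow_cvg | exact: hsum_cvg |].
  apply: nearW => M; rewrite -hsum_kpow_exp.
  exact/hsum_kpow_homo/leq_self_expn.
apply: limr_le; first exact: hsum_cvg.
apply: nearW => T; rewrite -hsum_kpow_exp.
exact: nondecreasing_cvgn_le hsum_kpow_homo hsum_kpow_cvg _.
Qed.

End OuterSum.

End Zk.

Theorem lemma2p3 (R : realType) (k c : nat) (hk : (2 <= k)%N) (hc : (0 < c)%N) :
  z_k R k c =
  xi_k R k *
  limn (fun T : nat => (\sum_(1 <= t < T)
     (if (c%:R `^ (k%:R)^-1 <= (t%:R : R)) then
        (if squarefree t then 1 else 0) / (t%:R) ^+ (2 * k)
        * prod_pdiv t (fun p => (1 - 2 / (p%:R ^+ k))^-1)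
      else 0) : R)).
Proof.
have k_gt0 : (0 < k)%N by apply: leq_trans hk.
rewrite (_ : (fun T : nat => _) = hsum R k c); last first.
  apply: funext => T; rewrite /hsum [RHS]big_mkcond.
  by apply: eq_bigr => t _; rewrite powR_invn_le_nat.
rewrite -lim_hsum_kpow // /z_k.
rewrite (_ : (fun M : nat => _) = fun M => xi_k R k * hsum_kpow R k c M); last first.
  apply: funext => M; rewrite -sum_zvalue // big_distrr /=.
  apply: eq_big_nat => r /andP[c_le_r _].
  exact: zterm_series_lim (leq_trans hc c_le_r).
apply: cvg_lim; first exact: Rhausdorff.
by apply: cvgMl_tmp; exact: hsum_kpow_cvg.
Qed.
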